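(* Let $0<b<c$ and let $(x_1,y_1),\ldots,(x_T,y_T)\in\mathbb{R}^d\times\{-1,+1\}$ be an arbitrary finite sequence of examples. Run the LASEC algorithm (described in the context) on this sequence, and let $t_1<t_2<\cdots<t_m$ be the rounds on which it makes a mistake, so that $m$ is its total number of mistakes. For $k=1,\ldots,m$ let $D_k$ be the matrix stored after the $k$-th update. Then for every sequence of vectors $u_1,\ldots,u_T\in\mathbb{R}^d$ and every $\gamma>0$, $$m\le \frac{1}{\gamma}L_{\gamma,T}(\{u_t\})+\frac{1}{\gamma}\sqrt{\Big(b\|u_{t_1}\|^2+cV_m+\sum_{k=1}^{m}(u_{t_k}^\top x_{t_k})^2\Big)\sum_{k=1}^{m}x_{t_k}^\top D_k^{-1}x_{t_k}},$$ where $V_m=\sum_{k=2}^{m}\|u_{t_k}-u_{t_{k-1}}\|^2$.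
   Context: LASEC algorithm with parameters $0<b<c$. Initialize $D_0=\frac{bc}{c-b}I\in\mathbb{R}^{d\times d}$, $e_0=0\in\mathbb{R}^d$, $k=1$. For $t=1,\ldots,T$: receive $x_t$; set $S_t=(D_{k-1}^{-1}+c^{-1}I)^{-1}+x_tx_t^\top$ and $\hat p_t=x_t^\top S_t^{-1}(I+c^{-1}D_{k-1})^{-1}e_{k-1}$; predict $\hat y_t=\mathrm{sign}(\hat p_t)$; receive $y_t$; if $\hat y_t\ne y_t$ (a mistake), set $e_k=(I+c^{-1}D_{k-1})^{-1}e_{k-1}+y_tx_t$, $D_k=S_t$, and $k\leftarrow k+1$. Hinge loss: $\ell_{\gamma,t}(u)=\max\{0,\gamma-y_tu^\top x_t\}$, and $L_{\gamma,T}(\{u_t\})=\sum_{t=1}^T\ell_{\gamma,t}(u_t)$. *)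

From HB Require Import structures.
From mathcomp Require Import all_boot all_order all_algebra.
Set Implicit Arguments. Unset Strict Implicit. Unset Printing Implicit Defensive.
Import Order.TTheory GRing.Theory Num.Theory.
Local Open Scope ring_scope.

Section LASEC.
Variables (R : rcfType) (d : nat) (b c : R).
(* examples: round t (t = 1..T) has instance x t and label y t *)
Variables (x : nat -> 'cV[R]_d) (y : nat -> R).

Definition qform (a : 'cV[R]_d) (M : 'M[R]_d) (a' : 'cV[R]_d) : R :=
  (a^T *m M *m a') 0 0.

Definition sqnorm (v : 'cV[R]_d) : R := (v^T *m v) 0 0.

Definition sgn (p : R) : R := if 0 <= p then 1 else -1.

Definition lasec_D0 : 'M[R]_d := (b * c / (c - b)) *: 1%:M.

Definition lasec_S (D : 'M[R]_d) (t : nat) : 'M[R]_d :=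
  invmx (invmx D + c^-1 *: 1%:M) + x t *m (x t)^T.

Definition lasec_shrink (D : 'M[R]_d) (e : 'cV[R]_d) : 'cV[R]_d :=
  invmx (1%:M + c^-1 *: D) *m e.

Definition lasec_p (D : 'M[R]_d) (e : 'cV[R]_d) (t : nat) : R :=
  ((x t)^T *m invmx (lasec_S D t) *m lasec_shrink D e) 0 0.

(* State after rounds 1..n: (D_{k}, e_{k}, list of mistake rounds t_1<..<t_k,
   list of stored matrices D_1,..,D_k). *)
Fixpoint lasec_run (n : nat)
  : 'M[R]_d * 'cV[R]_d * seq nat * seq 'M[R]_d :=
  match n with
  | 0 => (lasec_D0, 0, [::], [::])
  | n'.+1 =>
    let: (D, e, ts, Ds) := lasec_run n' in
    let t := n'.+1 in
    if sgn (lasec_p D e t) != y t then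
      let S := lasec_S D t in
      (S, lasec_shrink D e + y t *: x t, rcons ts t, rcons Ds S)
    else (D, e, ts, Ds)
  end.

Definition mistakes (T : nat) : seq nat := (lasec_run T).1.2.
Definition stored_D (T : nat) : seq 'M[R]_d := (lasec_run T).2.

End LASEC.

Definition hinge {R : rcfType} {d : nat} (gamma : R) (x : 'cV[R]_d) (y : R)
  (u : 'cV[R]_d) : R :=
  Num.max 0 (gamma - y * (u^T *m x) 0 0).

Definition cum_hinge {R : rcfType} {d : nat} (gamma : R) (T : nat)
  (x : nat -> 'cV[R]_d) (y : nat -> R) (u : nat -> 'cV[R]_d) : R :=
  \sum_(1 <= t < T.+1) hinge gamma (x t) (y t) (u t).

From HB Require Import structures.
From mathcomp Require Import all_boot all_order all_algebra.
From mathcomp Require Import ring lra.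
Import Order.TTheory GRing.Theory Num.Theory.
Local Open Scope ring_scope.
Set Implicit Arguments. Unset Strict Implicit. Unset Printing Implicit Defensive.

(* A potential argument.  For positive definite [D], the quadratic
   [potential D e u = -(u - D^-1 e)^T D (u - D^-1 e)] is nonpositive.  On a
   mistake, the update [D -> S = (D^-1 + I/c)^-1 + x x^T],
   [e -> (I + D/c)^-1 e + y x] raises it by at least
   [2 y u^T x - (u^T x)^2 - c |u - v|^2 - x^T S^-1 x] when the comparator moves
   from [v] to [u]: the shrinking is controlled by the infimal convolution bound
   [z^T (D^-1 + I/c)^-1 z <= a^T D a + c |z - a|^2], and the mistake makes the
   cross term with the prediction nonpositive.  Telescoping with comparators
   scaled by [l] gives [2 l M - l^2 Q <= B] for all [l], where
   [M = sum_k y_k u_k^T x_k], [Q] is the comparator cost of the bound and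
   [B = sum_k x_k^T D_k^-1 x_k]; hence [M <= sqrt (Q B)], and each mistake
   contributes [gamma <= hinge loss + y u^T x]. *)

Section Dot.
Variables (R : rcfType) (n : nat).
Implicit Types (v w : 'cV[R]_n) (A : 'M[R]_n).

Definition dot v w : R := (v^T *m w) 0 0.

Lemma dotC v w : dot v w = dot w v.
Proof. by rewrite /dot -(trmxK (w^T *m v)) trmx_mul trmxK [in RHS]mxE. Qed.

Lemma dotDl v v' w : dot (v + v') w = dot v w + dot v' w.
Proof. by rewrite /dot linearD /= mulmxDl mxE. Qed.

Lemma dotDr v w w' : dot v (w + w') = dot v w + dot v w'.
Proof. by rewrite /dot mulmxDr mxE. Qed.

Lemma dotZl a v w : dot (a *: v) w = a * dot v w.
Proof. by rewrite /dot linearZ /= -scalemxAl mxE. Qed.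

Lemma dotZr a v w : dot v (a *: w) = a * dot v w.
Proof. by rewrite /dot -scalemxAr mxE. Qed.

Lemma dotNl v w : dot (- v) w = - dot v w.
Proof. by rewrite -scaleN1r dotZl mulN1r. Qed.

Lemma dotBl v v' w : dot (v - v') w = dot v w - dot v' w.
Proof. by rewrite dotDl dotNl. Qed.

Lemma dotBr v w w' : dot v (w - w') = dot v w - dot v w'.
Proof. by rewrite dotC dotBl (dotC w) (dotC w'). Qed.

Lemma dot0l w : dot 0 w = 0.
Proof. by rewrite /dot linear0 mul0mx mxE. Qed.

Lemma dotMl A v w : dot (A *m v) w = dot v (A^T *m w).
Proof. by rewrite /dot trmx_mul mulmxA. Qed.

Lemma dotvv_ge0 v : 0 <= dot v v.
Proof. by rewrite /dot mxE; apply: sumr_ge0 => i _; rewrite mxE -expr2 sqr_ge0. Qed.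

Lemma dotvv_eq0 v : (dot v v == 0) = (v == 0).
Proof.
apply/eqP/eqP => [|->]; last exact: dot0l.
rewrite /dot mxE => /eqP; rewrite psumr_eq0 => [/allP v0|i _]; last first.
  by rewrite mxE -expr2 sqr_ge0.
apply/matrixP => i j; rewrite (ord1 j) mxE.
by have := v0 i (mem_index_enum _); rewrite mxE -expr2 sqrf_eq0 => /eqP.
Qed.

Lemma dotvv_gt0 v : v != 0 -> 0 < dot v v.
Proof. by rewrite lt_def dotvv_eq0 dotvv_ge0 andbT. Qed.

Lemma dot_young v w (c : R) : 0 < c -> 2 * dot v w <= c * dot v v + c^-1 * dot w w.
Proof.
move=> c0; rewrite -subr_ge0.
have -> : c * dot v v + c^-1 * dot w w - 2 * dot v w
        = c * dot (v - c^-1 *: w) (v - c^-1 *: w).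
  by rewrite !(dotBl, dotBr, dotZl, dotZr) (dotC w v); field; rewrite gt_eqF.
exact: mulr_ge0 (ltW c0) (dotvv_ge0 _).
Qed.

Lemma sqnormE v : sqnorm v = dot v v.
Proof. by []. Qed.

Lemma qformE v A w : qform v A w = dot v (A *m w).
Proof. by rewrite /qform /dot mulmxA. Qed.

Lemma rank1_mulmx v w : v *m v^T *m w = dot v w *: v.
Proof. by rewrite -mulmxA [v^T *m w]mx11_scalar mul_mx_scalar. Qed.

End Dot.

Section PosDef.
Variables (R : rcfType) (n : nat).
Implicit Types (v w : 'cV[R]_n) (A B M : 'M[R]_n).

Definition symmx M := M^T = M.
Definition psdmx M := forall v, 0 <= dot v (M *m v).
Definition pdmx M := forall v, v != 0 -> 0 < dot v (M *m v).

Lemma pdmx_psd M : pdmx M -> psdmx M.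
Proof.
move=> pM v; have [->|v0] := eqVneq v 0; first by rewrite dot0l.
exact/ltW/pM.
Qed.

Lemma pdmx_unit M : pdmx M -> M \in unitmx.
Proof.
move=> pM; rewrite -row_free_unit -kermx_eq0; apply/rowV0P => v /sub_kermxP vM0.
apply/eqP; apply: contraT => v0.
have := pM v^T; rewrite -trmx_eq0 trmxK => /(_ v0).
by rewrite /dot trmxK mulmxA vM0 mul0mx mxE ltxx.
Qed.

Lemma symmx_inv M : symmx M -> symmx (invmx M).
Proof. by rewrite /symmx trmx_inv => ->. Qed.

Lemma pdmx_inv M : symmx M -> pdmx M -> pdmx (invmx M).
Proof.
move=> sM pM v v0; have uM := pdmx_unit pM.
have w0 : invmx M *m v != 0.
  by apply: contraNneq v0 => Mv0; rewrite -(mulKVmx uM v) Mv0 mulmx0.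
by have := pM _ w0; rewrite mulKVmx // dotC.
Qed.

Lemma symmxD A B : symmx A -> symmx B -> symmx (A + B).
Proof. by rewrite /symmx linearD /= => -> ->. Qed.

Lemma pdmxD A B : pdmx A -> psdmx B -> pdmx (A + B).
Proof. by move=> pA pB v v0; rewrite mulmxDl dotDr; apply: ltr_wpDr (pB v) (pA v v0). Qed.

Lemma symmx_scalar a : symmx (a *: 1%:M).
Proof. by rewrite /symmx linearZ /= trmx1. Qed.

Lemma dot_scalar_mulmx a v w : dot v ((a *: 1%:M) *m w) = a * dot v w.
Proof. by rewrite -scalemxAl mul1mx dotZr. Qed.

Lemma pdmx_scalar a : 0 < a -> pdmx (a *: 1%:M).
Proof. by move=> a0 v v0; rewrite dot_scalar_mulmx mulr_gt0 // dotvv_gt0. Qed.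

Lemma psdmx_scalar a : 0 <= a -> psdmx (a *: 1%:M).
Proof. by move=> a0 v; rewrite dot_scalar_mulmx mulr_ge0 // dotvv_ge0. Qed.

Lemma symmx_rank1 v : symmx (v *m v^T).
Proof. by rewrite /symmx trmx_mul trmxK. Qed.

Lemma psdmx_rank1 v : psdmx (v *m v^T).
Proof. by move=> w; rewrite rank1_mulmx dotZr (dotC w) -expr2 sqr_ge0. Qed.

Lemma dot_symmxC M v w : symmx M -> dot v (M *m w) = dot w (M *m v).
Proof. by move=> sM; rewrite dotC dotMl sM. Qed.

Lemma dot_quadB M v w : symmx M ->
  dot (v - w) (M *m (v - w)) = dot v (M *m v) - 2 * dot v (M *m w) + dot w (M *m w).
Proof. by move=> sM; rewrite mulmxBr dotBl !dotBr (dot_symmxC w v sM); ring. Qed.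

Lemma psdmx_quad_le M v w : symmx M -> psdmx M ->
  2 * dot v (M *m w) - dot w (M *m w) <= dot v (M *m v).
Proof. by move=> sM pM; have := pM (v - w); rewrite dot_quadB //; lra. Qed.

Lemma rank1_update_quad_le M (a : 'cV[R]_n) w : symmx M -> pdmx M ->
  dot (M *m w) (invmx (M + a *m a^T) *m (M *m w)) <= dot w (M *m w).
Proof.
move=> sM pM; set S := M + a *m a^T.
have uS : S \in unitmx by apply/pdmx_unit/pdmxD/psdmx_rank1.
set v := invmx S *m (M *m w).
have Mw_Sv : M *m w = S *m v by rewrite mulKVmx.
have quad_v : dot (M *m w) v = dot v (M *m v) + dot a v ^+ 2.
  by rewrite Mw_Sv mulmxDl rank1_mulmx dotDl dotZl (dotC (M *m v)) expr2.
have := psdmx_quad_le w v sM (pdmx_psd pM).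
rewrite (dot_symmxC w v sM) (dotC v) quad_v; have := sqr_ge0 (dot a v); lra.
Qed.

End PosDef.

Definition shrinkmx (R : rcfType) n (D : 'M[R]_n) (c : R) : 'M[R]_n :=
  invmx (invmx D + c^-1 *: 1%:M).

Definition potential (R : rcfType) n (M : 'M[R]_n) (e u : 'cV[R]_n) : R :=
  - dot (u - invmx M *m e) (M *m (u - invmx M *m e)).

Section Potential.
Variables (R : rcfType) (n : nat).
Implicit Types (e u : 'cV[R]_n) (M : 'M[R]_n).

Lemma potential_le0 M e u : pdmx M -> potential M e u <= 0.
Proof. by move=> pM; rewrite /potential oppr_le0 pdmx_psd. Qed.

Lemma potentialE M e u : symmx M -> M \in unitmx ->
  potential M e u = 2 * dot u e - dot u (M *m u) - dot e (invmx M *m e).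
Proof.
move=> sM uM; rewrite /potential dot_quadB // !mulKVmx // (dotC (invmx M *m e)); ring.
Qed.

End Potential.

Section Shrink.
Variables (R : rcfType) (n : nat) (D : 'M[R]_n) (c : R).
Hypotheses (sD : symmx D) (pD : pdmx D) (c0 : 0 < c).

Local Notation Q := (invmx D + c^-1 *: 1%:M).

Let symmx_Q : symmx Q.
Proof. exact/symmxD/symmx_scalar/symmx_inv. Qed.

Let pdmx_Q : pdmx Q.
Proof. by apply: pdmxD (pdmx_inv sD pD) (psdmx_scalar _); rewrite invr_ge0 ltW. Qed.

Lemma symmx_shrinkmx : symmx (shrinkmx D c).
Proof. exact: symmx_inv symmx_Q. Qed.

Lemma pdmx_shrinkmx : pdmx (shrinkmx D c).
Proof. exact: pdmx_inv symmx_Q pdmx_Q. Qed.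

(* The quadratic form of [shrinkmx D c] is the infimal convolution of those
   of [D] and [c *: 1%:M]; only the easy inequality is needed. *)
Lemma shrinkmx_quad_le z a :
  dot z (shrinkmx D c *m z) <= dot a (D *m a) + c * dot (z - a) (z - a).
Proof.
have uQ := pdmx_unit pdmx_Q.
set r := shrinkmx D c *m z.
have z_Qr : z = invmx D *m r + c^-1 *: r.
  by rewrite -{1}(mulKVmx uQ z) mulmxDl -scalemxAl mul1mx.
have hD := psdmx_quad_le a (invmx D *m r) sD (pdmx_psd pD).
rewrite mulKVmx ?pdmx_unit // in hD.
have hc := dot_young (z - a) r c0.
have zr : dot z r = dot r (invmx D *m r) + c^-1 * dot r r.
  by rewrite {1}z_Qr dotDl dotZl (dotC _ r).
rewrite dotBl in hc; rewrite (dotC (invmx D *m r)) in hD; lra.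
Qed.

Lemma lasec_shrinkE e : lasec_shrink c D e = shrinkmx D c *m (invmx D *m e).
Proof.
have uQ := pdmx_unit pdmx_Q; have uD := pdmx_unit pD.
have DQ : 1%:M + c^-1 *: D = D *m Q by rewrite mulmxDr mulmxV // -scalemxAr mulmx1.
have uDQ : 1%:M + c^-1 *: D \in unitmx by rewrite DQ unitmx_mul uD uQ.
rewrite /lasec_shrink; set w := invmx D *m e.
have -> : e = (1%:M + c^-1 *: D) *m (shrinkmx D c *m w).
  by rewrite DQ -mulmxA (mulKVmx uQ) (mulKVmx uD).
by rewrite mulKmx.
Qed.

(* The prediction rule enters only through the sign of the cross term
   [2 * y * dot a (invmx S *m s)] of the new potential. *)
Lemma potential_mistake_step (a : 'cV[R]_n) (y : R) e u v :
  y * y = 1 ->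
  let S := shrinkmx D c + a *m a^T in
  let s := lasec_shrink c D e in
  y * dot a (invmx S *m s) <= 0 ->
  potential D e v - c * dot (u - v) (u - v) + 2 * y * dot u a - dot u a ^+ 2
    <= potential S (s + y *: a) u + dot a (invmx S *m a).
Proof.
move=> yy S s mistake; set P := shrinkmx D c; set w := invmx D *m e.
have sP : symmx P := symmx_shrinkmx.
have pP : pdmx P := pdmx_shrinkmx.
have sS : symmx S by apply/symmxD/symmx_rank1.
have uS : S \in unitmx by apply/pdmx_unit/pdmxD/psdmx_rank1.
have sE : s = P *m w := lasec_shrinkE e.
have uSu : dot u (S *m u) = dot u (P *m u) + dot u a ^+ 2.
  by rewrite mulmxDl rank1_mulmx dotDr dotZr (dotC u a) expr2.
have ue' : dot u (s + y *: a) = dot u (P *m w) + y * dot u a.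
  by rewrite dotDr dotZr sE.
have e'e' : dot (s + y *: a) (invmx S *m (s + y *: a))
    = dot s (invmx S *m s) + 2 * y * dot a (invmx S *m s) + y * y * dot a (invmx S *m a).
  rewrite mulmxDr -scalemxAr !(dotDl, dotDr, dotZl, dotZr).
  by rewrite (dot_symmxC s a (symmx_inv sS)); ring.
have mono : dot s (invmx S *m s) <= dot w (P *m w).
  by rewrite sE; apply: rank1_update_quad_le.
have shrink := shrinkmx_quad_le (u - w) (v - w).
rewrite opprB addrA subrK in shrink.
rewrite [potential S _ _]potentialE // uSu ue' e'e' yy /potential -/w.
rewrite !dot_quadB // in shrink *; lra.
Qed.

End Shrink.

Lemma sum_nth_rcons2 (V : nmodType) (T1 T2 : Type) (x1 : T1) (x2 : T2)
    (F : nat -> T1 -> T2 -> V) (s1 : seq T1) (s2 : seq T2) t1 t2 :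
  size s1 = size s2 ->
  \sum_(1 <= k < (size (rcons s1 t1)).+1)
      F k (nth x1 (rcons s1 t1) k.-1) (nth x2 (rcons s2 t2) k.-1)
  = \sum_(1 <= k < (size s1).+1) F k (nth x1 s1 k.-1) (nth x2 s2 k.-1)
    + F (size s1).+1 t1 t2.
Proof.
move=> sz; rewrite size_rcons big_nat_recr //= !nth_rcons -sz ltnn eqxx.
congr (_ + _); apply: eq_big_nat => k /andP [k1 km]; rewrite !nth_rcons -sz.
by case: k k1 km => // k _; rewrite ltnS => ->.
Qed.

Lemma sum_nth_rcons (V : nmodType) (T : Type) (x0 : T) (F : nat -> T -> V) s t :
  \sum_(1 <= k < (size (rcons s t)).+1) F k (nth x0 (rcons s t) k.-1)
  = \sum_(1 <= k < (size s).+1) F k (nth x0 s k.-1) + F (size s).+1 t.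
Proof. exact: (sum_nth_rcons2 x0 x0 (fun k a _ => F k a) t t (erefl (size s))). Qed.

Lemma sgn_neq_mul_le0 (R : rcfType) (p z : R) :
  z = 1 \/ z = -1 -> sgn p != z -> z * p <= 0.
Proof.
rewrite /sgn; case: ifP => p0; case=> -> //=; rewrite ?eqxx // => _.
  by rewrite mulN1r oppr_le0.
by rewrite mul1r ltW // ltNge p0.
Qed.

Section Run.
Variables (R : rcfType) (d : nat) (b c : R) (x : nat -> 'cV[R]_d) (y : nat -> R).
Hypotheses (b0 : 0 < b) (bc : b < c).

Local Notation run := (lasec_run b c x y).
Local Notation ts n := (mistakes b c x y n).
Local Notation tk n k := (nth 0%N (ts n) k.-1).

Let c0 : 0 < c. Proof. exact: lt_trans bc. Qed.

Lemma pdmx_lasec_D0 : pdmx (lasec_D0 d b c).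
Proof. by apply: pdmx_scalar; rewrite divr_gt0 ?mulr_gt0 ?subr_gt0. Qed.

Lemma lasec_run_pd n : symmx (run n).1.1.1 /\ pdmx (run n).1.1.1.
Proof.
elim: n => [|n IH] /=; first by split; [exact: symmx_scalar|exact: pdmx_lasec_D0].
move: IH; case: (run n) => [[[D e] ts] Ds] /= [sD pD].
case: ifP => _ //=; split.
  exact/symmxD/symmx_rank1/symmx_shrinkmx.
exact/pdmxD/psdmx_rank1/pdmx_shrinkmx.
Qed.

Lemma size_stored_D n : size (stored_D b c x y n) = size (ts n).
Proof.
rewrite /stored_D /mistakes; elim: n => //= n.
by case: (run n) => [[[D e] ts] Ds] /= IH; case: ifP => _ //=; rewrite !size_rcons IH.
Qed.

Lemma sum_mistakes_le (h : nat -> R) n : (forall t, 0 <= h t) ->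
  \sum_(1 <= k < (size (ts n)).+1) h (tk n k) <= \sum_(1 <= t < n.+1) h t.
Proof.
move=> h0; elim: n => [|n IH]; first by rewrite !big_geq.
rewrite [X in _ <= X]big_nat_recr //=; move: IH; rewrite /mistakes /=.
case: (run n) => [[[D e] ts] Ds] /= IH; case: ifP => _ /=; last first.
  by rewrite -[X in X <= _]addr0; apply: lerD.
by rewrite (sum_nth_rcons 0%N (fun _ => h)); apply: lerD.
Qed.

Definition mistake_gain n (U : nat -> 'cV[R]_d) : R :=
  \sum_(1 <= k < (size (ts n)).+1)
     (2 * y (tk n k) * dot (U k) (x (tk n k)) - dot (U k) (x (tk n k)) ^+ 2)
  - dot (U 0%N) (lasec_D0 d b c *m U 0%N)
  - c * \sum_(1 <= k < (size (ts n)).+1) dot (U k - U k.-1) (U k - U k.-1).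

Definition mistake_norm n : R :=
  \sum_(1 <= k < (size (ts n)).+1)
     qform (x (tk n k)) (invmx (nth 0 (stored_D b c x y n) k.-1)) (x (tk n k)).

Lemma lasec_run_potential n :
  (forall t, (1 <= t <= n)%N -> y t = 1 \/ y t = -1) ->
  forall U, mistake_gain n U
    <= potential (run n).1.1.1 (run n).1.1.2 (U (size (ts n))) + mistake_norm n.
Proof.
elim: n => [|n IH] y_pm1 U.
  rewrite /mistake_gain /mistake_norm /potential /= !big_geq //.
  by rewrite mulmx0 mulr0 !subr0 add0r addr0.
have y_pm1n : forall t, (1 <= t <= n)%N -> y t = 1 \/ y t = -1.
  by move=> t /andP [t1 tn]; apply: y_pm1; rewrite t1 leqW.
have := IH y_pm1n U.
have [sD pD] := lasec_run_pd n; have := size_stored_D n.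
rewrite /mistake_gain /mistake_norm /stored_D /mistakes /=.
case: (run n) sD pD => [[[D e] ts] Ds] /= sD pD sz.
case: ifP => mistake //=; set t := n.+1; set S := lasec_S c x D t.
have E1 := sum_nth_rcons 0%N
  (fun k t => 2 * y t * dot (U k) (x t) - dot (U k) (x t) ^+ 2) ts t.
have E2 := sum_nth_rcons 0%N (fun k _ => dot (U k - U k.-1) (U k - U k.-1)) ts t.
have E3 := sum_nth_rcons2 0%N 0 (fun _ t D => qform (x t) (invmx D) (x t)) t S (esym sz).
rewrite /= in E1 E2 E3; rewrite E1 E2 E3 size_rcons [qform (x t) _ _]qformE.
have yt : y t = 1 \/ y t = -1 by apply: y_pm1; rewrite /t leqnn.
have yy : y t * y t = 1 by case: yt => ->; rewrite ?mulrNN mulr1.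
have margin_le0 : y t * dot (x t) (invmx S *m lasec_shrink c D e) <= 0.
  by rewrite /dot mulmxA; exact: sgn_neq_mul_le0 yt mistake.
have := @potential_mistake_step _ _ D c sD pD c0 (x t) (y t) e
  (U (size ts).+1) (U (size ts)) yy margin_le0.
lra.
Qed.

Lemma mistake_gain_le_norm n :
  (forall t, (1 <= t <= n)%N -> y t = 1 \/ y t = -1) ->
  forall U, mistake_gain n U <= mistake_norm n.
Proof.
move=> y_pm1 U; apply: le_trans (lasec_run_potential y_pm1 U) _.
by rewrite gerDr; apply/potential_le0/(lasec_run_pd n).2.
Qed.

End Run.

Lemma le_sqrt_of_quad (R : rcfType) (s Q B : R) :
  (forall l, 2 * l * s - l ^+ 2 * Q <= B) -> s <= Num.sqrt (Q * B).
Proof.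
move=> quad; have B0 : 0 <= B by have := quad 0; rewrite mulr0 mul0r expr0n mul0r subr0.
have [s0|s0] := lerP s 0; first exact: le_trans s0 (sqrtr_ge0 _).
have Q0 : 0 < Q.
  rewrite ltNge; apply/negP => Q0; have := quad ((B + 1) / s).
  have -> : 2 * ((B + 1) / s) * s = 2 * (B + 1) by field; rewrite gt_eqF.
  have := sqr_ge0 ((B + 1) / s); nra.
have s2_le : s ^+ 2 <= Q * B.
  have := quad (s / Q).
  have -> : 2 * (s / Q) * s - (s / Q) ^+ 2 * Q = s ^+ 2 / Q by field; rewrite gt_eqF.
  by rewrite ler_pdivrMr // mulrC.
by rewrite -[s]gtr0_norm // -sqrtr_sqr ler_wsqrtr.
Qed.

Section MistakeBound.
Variables (R : rcfType) (d : nat) (b c : R) (T : nat).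
Variables (x : nat -> 'cV[R]_d) (y : nat -> R) (u : nat -> 'cV[R]_d) (gamma : R).

Local Notation ts := (mistakes b c x y T).
Local Notation m := (size ts).
Local Notation tk k := (nth 0%N ts k.-1).
Local Notation margin :=
  (\sum_(1 <= k < m.+1) y (tk k) * dot (u (tk k)) (x (tk k))).

Lemma mistakes_le_hinge_margin :
  m%:R * gamma <= cum_hinge gamma T x y u + margin.
Proof.
have hinge_ge0 t : 0 <= hinge gamma (x t) (y t) (u t) by rewrite le_max lexx.
have := sum_mistakes_le b c x y T hinge_ge0.
have : \sum_(1 <= k < m.+1) (gamma - y (tk k) * dot (u (tk k)) (x (tk k)))
    <= \sum_(1 <= k < m.+1) hinge gamma (x (tk k)) (y (tk k)) (u (tk k)).
  by apply: ler_sum => k _; rewrite le_max lexx orbT.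
rewrite sumrB sumr_const_nat subn1 /= -mulr_natl /cum_hinge; lra.
Qed.

Hypotheses (b0 : 0 < b) (bc : b < c).
Hypothesis y_pm1 : forall t, (1 <= t <= T)%N -> y t = 1 \/ y t = -1.

Local Notation Vm := (\sum_(2 <= k < m.+1) sqnorm (u (tk k) - u (tk k.-1))).
Local Notation comparator_cost :=
  (b * sqnorm (u (tk 1%N)) + c * Vm
   + \sum_(1 <= k < m.+1) ((u (tk k))^T *m x (tk k)) 0 0 ^+ 2).

Lemma margin_quad_le l : (0 < m)%N ->
  2 * l * margin - l ^+ 2 * comparator_cost <= mistake_norm b c x y T.
Proof.
move=> m_gt0; have c0 : 0 < c := lt_trans b0 bc.
(* [(c - b) / c] makes [U 0]'s initial cost plus the first drift cost exactly
   [l ^+ 2 * b * sqnorm (u (tk 1))]. *)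
pose U k := l *: (if k is 0 then ((c - b) / c) *: u (tk 1%N) else u (tk k)).
set N := sqnorm (u (tk 1%N)).
have gainE : \sum_(1 <= k < m.+1)
    (2 * y (tk k) * dot (U k) (x (tk k)) - dot (U k) (x (tk k)) ^+ 2)
  = 2 * l * margin - l ^+ 2 * \sum_(1 <= k < m.+1) ((u (tk k))^T *m x (tk k)) 0 0 ^+ 2.
  rewrite !mulr_sumr -sumrB; apply: eq_big_nat => k /andP [k1 _].
  by case: k k1 => // k _; rewrite /U dotZl /dot; ring.
have initE : dot (U 0%N) (lasec_D0 d b c *m U 0%N)
    = l ^+ 2 * (b * c / (c - b) * ((c - b) / c) ^+ 2) * N.
  by rewrite /lasec_D0 dot_scalar_mulmx /U !dotZl !dotZr /N sqnormE; ring.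
have driftE : \sum_(1 <= k < m.+1) dot (U k - U k.-1) (U k - U k.-1)
    = l ^+ 2 * ((b / c) ^+ 2 * N + Vm).
  rewrite big_ltn ?ltnS // mulrDr; congr (_ + _).
    rewrite /U /= -scalerBr !dotZl !dotZr !(dotBl, dotBr, dotZl, dotZr) /N sqnormE.
    by field; rewrite gt_eqF.
  rewrite mulr_sumr; apply: eq_big_nat => k /andP [k1 _].
  case: k k1 => [|[|k]] // _.
  by rewrite /U /= -scalerBr dotZl dotZr mulrA -expr2 sqnormE.
have costE : b * c / (c - b) * ((c - b) / c) ^+ 2 = b - c * (b / c) ^+ 2.
  by field; rewrite subr_eq0 !gt_eqF.
have := mistake_gain_le_norm x b0 bc y_pm1 U.
rewrite /mistake_gain gainE initE driftE costE; lra.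
Qed.

End MistakeBound.

Unset Implicit Arguments.

Theorem theorem2 (R : rcfType) (d : nat) (b c : R) (T : nat)
  (x : nat -> 'cV[R]_d) (y : nat -> R) :
  0 < b -> b < c ->
  (forall t, (1 <= t <= T)%N -> y t = 1 \/ y t = -1) ->
  let ts := mistakes b c x y T in
  let Ds := stored_D b c x y T in
  let m := size ts in
  let tk := fun k : nat => nth 0%N ts k.-1 in
  let Dk := fun k : nat => nth 0 Ds k.-1 in
  forall (u : nat -> 'cV[R]_d) (gamma : R), 0 < gamma ->
  let Vm := \sum_(2 <= k < m.+1) sqnorm (u (tk k) - u (tk k.-1)) in
  m%:R <= gamma^-1 * cum_hinge gamma T x y u
          + gamma^-1 * Num.sqrt
              ((b * sqnorm (u (tk 1%N)) + c * Vm
                + \sum_(1 <= k < m.+1) ((u (tk k))^T *m x (tk k)) 0 0 ^+ 2)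
               * \sum_(1 <= k < m.+1) qform (x (tk k)) (invmx (Dk k)) (x (tk k))).
Proof.
move=> b0 bc y_pm1 ts Ds m tk Dk u gamma g0; cbv zeta.
rewrite -mulrDr ler_pdivlMl // mulrC.
apply: le_trans (mistakes_le_hinge_margin b c T x y u gamma) _.
rewrite lerD2l; have [m0|m_gt0] := posnP m.
  by rewrite /m /ts in m0; rewrite m0 big_geq //; apply: sqrtr_ge0.
exact: le_sqrt_of_quad (fun l => margin_quad_le u b0 bc y_pm1 l m_gt0).
Qed.
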